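(* For any sequence of groups $(G_n)_{n\in\mathbb N}$: (1) for every permutation $f:\mathbb N\to\mathbb N$, $\mathcal A(G_n)\cong\mathcal A(G_{f(n)})$; (2) for every $k\in\mathbb N$, $\mathcal A(G_n)\cong\mathcal A((G_n)_{n\ge k})$; (3) $\mathcal A(G_n)\cong\mathcal A(G_{2n-1}*G_{2n})$, the archipelago group of the sequence $(G_{2n-1}*G_{2n})_{n\in\mathbb N}$.
   Context: For a sequence of groups $(G_n)_{n\in\mathbb N}$, an infinite word is a map $w:L\to\bigsqcup_n (G_n\setminus\{1\})$ from a countable linearly ordered set $L$ such that $w^{-1}(G_n)$ is finite for every $n$. Two infinite words are equivalent if for every $m$ their restrictions to the letters from $G_1,\dots,G_m$ represent the same element of $G_1*\cdots*G_m$. The topologist's product $\circledast_n G_n$ is the group of equivalence classes, with multiplication induced by concatenation and inversion by reversing the order and inverting each letter. The free product $*_n G_n$ is the subgroup of classes of finite words. The archipelago group is $\mathcal A(G_n):=\circledast_n G_n/\langle\langle *_n G_n\rangle\rangle$ (quotient by normal closure); the same construction applies to any countable sequence of groups. *)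

From Stdlib Require Import List Sorting.Sorted Arith Lia Classical ProofIrrelevance.
Import ListNotations.

Record GrpData : Type := {
  car :> Type;
  geq : car -> car -> Prop;
  gmul : car -> car -> car;
  gone : car;
  ginv : car -> car }.

Record is_group (G : GrpData) : Prop := {
  geq_refl : forall x, geq G x x;
  geq_sym : forall x y, geq G x y -> geq G y x;
  geq_trans : forall x y z, geq G x y -> geq G y z -> geq G x z;
  gmul_compat : forall x x' y y', geq G x x' -> geq G y y' ->
                  geq G (gmul G x y) (gmul G x' y');
  ginv_compat : forall x x', geq G x x' -> geq G (ginv G x) (ginv G x');
  gmul_assoc : forall x y z,
                 geq G (gmul G (gmul G x y) z) (gmul G x (gmul G y z));
  gmul_1l : forall x, geq G (gmul G (gone G) x) x;
  gmul_1r : forall x, geq G (gmul G x (gone G)) x;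
  gmul_Vl : forall x, geq G (gmul G (ginv G x) x) (gone G);
  gmul_Vr : forall x, geq G (gmul G x (ginv G x)) (gone G) }.

Section FreeProduct.
Variables (I : Type) (F : I -> GrpData).

Definition fletter : Type := {i : I & car (F i)}.

Inductive fp_step : list fletter -> list fletter -> Prop :=
| fps_eq i (x y : car (F i)) : geq (F i) x y ->
    fp_step [existT _ i x] [existT _ i y]
| fps_mul i (x y : car (F i)) :
    fp_step [existT _ i x; existT _ i y] [existT _ i (gmul (F i) x y)]
| fps_one i : fp_step [existT _ i (gone (F i))] [].

Inductive fpeq : list fletter -> list fletter -> Prop :=
| fpeq_step a u v b : fp_step u v -> fpeq (a ++ u ++ b) (a ++ v ++ b)
| fpeq_refl u : fpeq u u
| fpeq_sym u v : fpeq u v -> fpeq v u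
| fpeq_trans u v w : fpeq u v -> fpeq v w -> fpeq u w.

Definition finv_letter (l : fletter) : fletter :=
  existT _ (projT1 l) (ginv (F (projT1 l)) (projT2 l)).

Definition FreeProd : GrpData := {|
  car := list fletter;
  geq := fpeq;
  gmul := @app fletter;
  gone := [];
  ginv := fun w => rev (map finv_letter w) |}.
End FreeProduct.

Definition fam2 (A B : GrpData) : bool -> GrpData :=
  fun b => if b then A else B.

Section Topologist.
Variable G : nat -> GrpData.

(* An infinite word: a countable (strict, total) linear order L and a map
   from L to the disjoint union of the G n \ {1}, with finite fibres over
   each G n. *)
Record IWord : Type := {
  iL : Type;
  ilt : iL -> iL -> Prop;
  ilt_irrefl : forall x, ~ ilt x x;
  ilt_trans : forall x y z, ilt x y -> ilt y z -> ilt x z;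
  ilt_total : forall x y, x = y \/ ilt x y \/ ilt y x;
  iL_countable : exists c : iL -> nat, forall x y, c x = c y -> x = y;
  iidx : iL -> nat;
  iletter : forall x, car (G (iidx x));
  iletter_nontriv : forall x, ~ geq (G (iidx x)) (iletter x) (gone (G (iidx x)));
  ifinite : forall n, exists s : list iL, forall x, iidx x = n -> In x s }.

Definition Gfam (m : nat) : {n : nat | n < m} -> GrpData :=
  fun i => G (proj1_sig i).

Definition rletter (w : IWord) (m : nat) (p : {x : iL w | iidx w x < m})
  : fletter {n : nat | n < m} (Gfam m) :=
  existT (fun i => car (Gfam m i))
    (exist (fun n => n < m) (iidx w (proj1_sig p)) (proj2_sig p))
    (iletter w (proj1_sig p)).

Definition restr_word (w : IWord) (m : nat) (u : list (fletter {n : nat | n < m} (Gfam m))) : Prop :=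
  exists s : list {x : iL w | iidx w x < m},
    StronglySorted (fun p q => ilt w (proj1_sig p) (proj1_sig q)) s /\
    (forall x, iidx w x < m -> In x (map (@proj1_sig _ _) s)) /\
    u = map (@rletter w m) s.

Definition tpeq (w v : IWord) : Prop :=
  forall m u1 u2, restr_word w m u1 -> restr_word v m u2 -> fpeq _ _ u1 u2.

Section Mul.
Variables w1 w2 : IWord.
Definition slt (x y : iL w1 + iL w2) : Prop :=
  match x, y with
  | inl a, inl b => ilt w1 a b
  | inr a, inr b => ilt w2 a b
  | inl _, inr _ => True
  | inr _, inl _ => False
  end.
Definition sidx (x : iL w1 + iL w2) : nat :=
  match x with inl a => iidx w1 a | inr b => iidx w2 b end.
Definition sletter (x : iL w1 + iL w2) : car (G (sidx x)) :=
  match x as x0 return car (G (sidx x0)) with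
  | inl a => iletter w1 a | inr b => iletter w2 b end.
Lemma slt_irrefl x : ~ slt x x.
Proof. destruct x; simpl; apply ilt_irrefl. Qed.
Lemma slt_trans x y z : slt x y -> slt y z -> slt x z.
Proof.
  destruct x, y, z; simpl; try tauto; eauto using ilt_trans.
Qed.
Lemma slt_total x y : x = y \/ slt x y \/ slt y x.
Proof.
  destruct x as [a|a], y as [b|b]; simpl; auto.
  - destruct (ilt_total w1 a b) as [->|[H|H]]; auto.
  - destruct (ilt_total w2 a b) as [->|[H|H]]; auto.
Qed.
Lemma s_countable : exists c : iL w1 + iL w2 -> nat, forall x y, c x = c y -> x = y.
Proof.
  destruct (iL_countable w1) as [c1 H1], (iL_countable w2) as [c2 H2].
  exists (fun x => match x with inl a => 2 * c1 a | inr b => S (2 * c2 b) end).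
  intros [a|a] [b|b] E; try lia.
  - f_equal; apply H1; lia.
  - f_equal; apply H2; lia.
Qed.
Lemma s_nontriv x : ~ geq (G (sidx x)) (sletter x) (gone (G (sidx x))).
Proof. destruct x; apply iletter_nontriv. Qed.
Lemma s_finite n : exists s : list (iL w1 + iL w2), forall x, sidx x = n -> In x s.
Proof.
  destruct (ifinite w1 n) as [s1 H1], (ifinite w2 n) as [s2 H2].
  exists (map inl s1 ++ map inr s2); intros [a|a] E; apply in_or_app;
  [left|right]; apply in_map; auto.
Qed.
Definition tmul : IWord := {|
  iL := iL w1 + iL w2; ilt := slt; ilt_irrefl := slt_irrefl;
  ilt_trans := slt_trans; ilt_total := slt_total; iL_countable := s_countable;
  iidx := sidx; iletter := sletter; iletter_nontriv := s_nontriv;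
  ifinite := s_finite |}.
End Mul.

(* inversion: reverse the order and invert every letter.  (The letters whose
   inverse is trivial are discarded; when every G n is a group there are none,
   so this is literally the reversed inverted word.) *)
Section Inv.
Variable w : IWord.
Definition vL : Type :=
  {x : iL w | ~ geq (G (iidx w x)) (ginv _ (iletter w x)) (gone (G (iidx w x)))}.
Definition vlt (x y : vL) : Prop := ilt w (proj1_sig y) (proj1_sig x).
Definition vidx (x : vL) : nat := iidx w (proj1_sig x).
Definition vletter (x : vL) : car (G (vidx x)) := ginv _ (iletter w (proj1_sig x)).
Lemma vlt_irrefl x : ~ vlt x x.
Proof. apply ilt_irrefl. Qed.
Lemma vlt_trans x y z : vlt x y -> vlt y z -> vlt x z.
Proof. unfold vlt; eauto using ilt_trans. Qed.
Lemma vL_eq (x y : vL) : proj1_sig x = proj1_sig y -> x = y.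
Proof.
  destruct x as [x px], y as [y py]; simpl; intros ->.
  f_equal; apply proof_irrelevance.
Qed.
Lemma vlt_total x y : x = y \/ vlt x y \/ vlt y x.
Proof.
  unfold vlt; destruct (ilt_total w (proj1_sig x) (proj1_sig y)) as [E|[H|H]];
  auto using vL_eq.
Qed.
Lemma v_countable : exists c : vL -> nat, forall x y, c x = c y -> x = y.
Proof.
  destruct (iL_countable w) as [c H].
  exists (fun x => c (proj1_sig x)); intros x y E; apply vL_eq, H, E.
Qed.
Lemma v_nontriv x : ~ geq (G (vidx x)) (vletter x) (gone (G (vidx x))).
Proof. exact (proj2_sig x). Qed.
Lemma v_finite n : exists s : list vL, forall x, vidx x = n -> In x s.
Proof.
  destruct (ifinite w n) as [s H].
  assert (K : exists s' : list vL, forall x : vL, In (proj1_sig x) s -> In x s').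
  { clear H; induction s as [|a s IH].
    - exists []; intros x [].
    - destruct IH as [s' Hs'].
      destruct (classic (~ geq (G (iidx w a)) (ginv _ (iletter w a))
                           (gone (G (iidx w a))))) as [P|P].
      + exists (exist _ a P :: s'); intros x [E|E].
        * left; apply vL_eq; auto.
        * right; auto.
      + exists s'; intros x [E|E]; auto.
        exfalso; subst a; exact (P (proj2_sig x)). }
  destruct K as [s' Hs']; exists s'; intros x E; apply Hs', H, E.
Qed.
Definition tinv : IWord := {|
  iL := vL; ilt := vlt; ilt_irrefl := vlt_irrefl; ilt_trans := vlt_trans;
  ilt_total := vlt_total; iL_countable := v_countable; iidx := vidx;
  iletter := vletter; iletter_nontriv := v_nontriv; ifinite := v_finite |}.
End Inv.

Definition tone : IWord.
Proof.
  refine {| iL := Empty_set; ilt := fun _ _ => False;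
            iidx := fun x : Empty_set => match x with end;
            iletter := fun x : Empty_set => match x with end |}.
  - intros [].
  - intros [].
  - intros [].
  - exists (fun x : Empty_set => match x with end); intros [].
  - intros [].
  - intros n; exists []; intros [].
Defined.

(* classes of finite words: the free product *_n G_n inside the
   topologist's product *)
Definition finite_word (w : IWord) : Prop :=
  exists s : list (iL w), forall x, In x s.

Definition tconj (g s : IWord) : IWord := tmul (tmul g s) (tinv g).

Definition in_nclosure (x : IWord) : Prop :=
  exists l : list (IWord * IWord),
    (forall p, In p l -> finite_word (snd p)) /\
    tpeq x (fold_right tmul tone (map (fun p => tconj (fst p) (snd p)) l)).

(* equality in the archipelago group A(G_n) *)
Definition aeq (x y : IWord) : Prop := in_nclosure (tmul x (tinv y)).

End Topologist.

Arguments tmul {G} w1 w2.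
Arguments tinv {G} w.
Arguments tone {G}.
Arguments aeq {G} x y.
Arguments tpeq {G} w v.

(* group isomorphism A(G_n) ~= A(H_n), with elements represented by infinite
   words: a map on representatives that is well defined, multiplicative,
   injective and surjective on classes. *)
Definition arch_isomorphic (G H : nat -> GrpData) : Prop :=
  exists phi : IWord G -> IWord H,
    (forall x y, aeq x y -> aeq (phi x) (phi y)) /\
    (forall x y, aeq (phi (tmul x y)) (tmul (phi x) (phi y))) /\
    (forall x y, aeq (phi x) (phi y) -> aeq x y) /\
    (forall z, exists x, aeq (phi x) z).

(* A letterwise substitution sending each letter of a factor [G n] to a finite
   word in the factors [H m], such that each [H m] receives letters from only
   finitely many [G n], extends to infinite words.  It commutes with restricting
   to finitely many factors, hence respects the equivalence of infinite words and
   concatenation, and it maps finite words to finite words; so it induces a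
   homomorphism of archipelago groups.  Re-indexing along a permutation, shifting
   by [k] and merging [G (2n)], [G (2n+1)] into their free product are such
   substitutions, each inverted by a substitution in the opposite direction up to
   deleting all letters from finitely many factors.  That deletion is invisible in
   the archipelago group: removing one letter [c] from [a c b] changes the class
   by the conjugate [a c a^-1] of a finite word, and finitely many factors carry
   only finitely many letters. *)

From Stdlib Require Import List Sorting.Sorted Arith Lia Classical ProofIrrelevance ClassicalEpsilon.
From Stdlib Require Cantor.
Import ListNotations.

Arguments iL {G} i.
Arguments ilt {G} i _ _.
Arguments iidx {G} i _.
Arguments iletter {G} i _.
Arguments fpeq {I F} _ _.
Arguments finv_letter {I F} l.

(** * Words in free products *)

Section FreeProductWords.
Context {I : Type} {F : I -> GrpData}.

Lemma fpeq_in_context a b u v : @fpeq I F u v -> fpeq (a ++ u ++ b) (a ++ v ++ b).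
Proof.
  induction 1 as [a' u v b' Hs| | |].
  - replace (a ++ (a' ++ u ++ b') ++ b) with ((a ++ a') ++ u ++ (b' ++ b))
      by now rewrite !app_assoc.
    replace (a ++ (a' ++ v ++ b') ++ b) with ((a ++ a') ++ v ++ (b' ++ b))
      by now rewrite !app_assoc.
    now apply fpeq_step.
  - apply fpeq_refl.
  - now apply fpeq_sym.
  - eapply fpeq_trans; eauto.
Qed.

Lemma fpeq_app u u' v v' : @fpeq I F u u' -> fpeq v v' -> fpeq (u ++ v) (u' ++ v').
Proof.
  intros Hu Hv. apply fpeq_trans with (u' ++ v).
  - exact (fpeq_in_context [] v u u' Hu).
  - pose proof (fpeq_in_context u' [] v v' Hv) as K. now rewrite !app_nil_r in K.
Qed.

Lemma fpeq_cons a u v : @fpeq I F u v -> fpeq (a :: u) (a :: v).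
Proof. apply (fpeq_app [a] [a]), fpeq_refl. Qed.

Lemma fpeq_of_step u v : fp_step I F u v -> fpeq u v.
Proof.
  intros H. pose proof (fpeq_step I F [] u v [] H) as K. simpl in K.
  now rewrite !app_nil_r in K.
Qed.

Lemma fpeq_letter_geq i x y : geq (F i) x y -> fpeq [existT _ i x] [existT _ i y].
Proof. intros H. now apply fpeq_of_step, fps_eq. Qed.

Lemma fpeq_letter_mul i x y :
  fpeq [existT _ i (gmul (F i) x y)] [existT _ i x; existT _ i y].
Proof. apply fpeq_sym, fpeq_of_step, fps_mul. Qed.

Lemma fpeq_letter_one i : fpeq [existT _ i (gone (F i))] [].
Proof. apply fpeq_of_step, fps_one. Qed.

Lemma fpeq_flat_map {A} (f g : A -> list (fletter I F)) l :
  (forall a, In a l -> fpeq (f a) (g a)) -> fpeq (flat_map f l) (flat_map g l).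
Proof.
  induction l as [|a l IH]; intros H; simpl.
  - apply fpeq_refl.
  - apply fpeq_app; auto with datatypes.
Qed.
End FreeProductWords.

Record subst_compat {I J} {F : I -> GrpData} {F' : J -> GrpData}
    (e : fletter I F -> list (fletter J F')) : Prop := {
  subst_geq : forall i x y, geq (F i) x y -> fpeq (e (existT _ i x)) (e (existT _ i y));
  subst_mul : forall i x y,
    fpeq (e (existT _ i (gmul (F i) x y))) (e (existT _ i x) ++ e (existT _ i y));
  subst_one : forall i, fpeq (e (existT _ i (gone (F i)))) [] }.

Lemma fpeq_flat_map_subst {I J} {F : I -> GrpData} {F' : J -> GrpData}
    (e : fletter I F -> list (fletter J F')) :
  subst_compat e -> forall u v, fpeq u v -> fpeq (flat_map e u) (flat_map e v).
Proof.
  intros [Hgeq Hmul Hone] u v H. induction H as [a u v b Hs| | |].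
  - rewrite !flat_map_app. apply fpeq_app; [apply fpeq_refl|].
    apply fpeq_app; [|apply fpeq_refl].
    destruct Hs; simpl; rewrite ?app_nil_r; auto. now apply fpeq_sym.
  - apply fpeq_refl.
  - now apply fpeq_sym.
  - eapply fpeq_trans; eauto.
Qed.

Lemma subst_compat_letterwise {I J} {F : I -> GrpData} {F' : J -> GrpData}
    (g : I -> J) (c : forall i, car (F i) -> car (F' (g i))) :
  (forall i x y, geq (F i) x y -> geq (F' (g i)) (c i x) (c i y)) ->
  (forall i x y, geq (F' (g i)) (c i (gmul (F i) x y)) (gmul (F' (g i)) (c i x) (c i y))) ->
  (forall i, geq (F' (g i)) (c i (gone (F i))) (gone (F' (g i)))) ->
  subst_compat (fun a : fletter I F => [existT _ (g (projT1 a)) (c _ (projT2 a))]).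
Proof.
  intros Hgeq Hmul Hone. split; intros i; simpl.
  - intros x y H. now apply fpeq_letter_geq, Hgeq.
  - intros x y. eapply fpeq_trans; [apply fpeq_letter_geq, Hmul|apply fpeq_letter_mul].
  - eapply fpeq_trans; [apply fpeq_letter_geq, Hone|apply fpeq_letter_one].
Qed.

Lemma subst_compat_reindex {I J} {F' : J -> GrpData} (g : I -> J) :
  subst_compat (F := fun i => F' (g i))
    (fun a => [existT (fun j => car (F' j)) (g (projT1 a)) (projT2 a)]).
Proof.
  split; intros i; simpl.
  - intros x y H. now apply fpeq_letter_geq.
  - intros x y. apply fpeq_letter_mul.
  - apply fpeq_letter_one.
Qed.

Section FilterIndex.
Context {I : Type} {F : I -> GrpData}.

Definition filter_index (p : I -> bool) : list (fletter I F) -> list (fletter I F) :=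
  flat_map (fun a => if p (projT1 a) then [a] else []).

Lemma filter_index_app p l1 l2 :
  filter_index p (l1 ++ l2) = filter_index p l1 ++ filter_index p l2.
Proof. apply flat_map_app. Qed.

Lemma filter_index_all p l : (forall b, In b l -> p (projT1 b) = true) -> filter_index p l = l.
Proof. induction l as [|b l IH]; simpl; intros K; auto. rewrite K; simpl; auto using f_equal. Qed.

Lemma filter_index_none p l : (forall b, In b l -> p (projT1 b) = false) -> filter_index p l = [].
Proof. induction l as [|b l IH]; simpl; intros K; auto. rewrite K; auto. Qed.

Lemma subst_compat_filter_index (p : I -> bool) :
  subst_compat (fun a : fletter I F => if p (projT1 a) then [a] else []).
Proof.
  split; intros i; cbn [projT1]; destruct (p i); intros; try apply fpeq_refl.
  - now apply fpeq_letter_geq.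
  - apply fpeq_letter_mul.
  - apply fpeq_letter_one.
Qed.

Lemma fpeq_filter_index p u v : fpeq u v -> fpeq (filter_index p u) (filter_index p v).
Proof. apply fpeq_flat_map_subst, subst_compat_filter_index. Qed.
End FilterIndex.

Section GroupFacts.
Context (G : GrpData) (HG : is_group G).

Lemma ginv_involutive x : geq G (ginv G (ginv G x)) x.
Proof.
  eapply (geq_trans _ HG); [apply (geq_sym _ HG), (gmul_1r _ HG)|].
  eapply (geq_trans _ HG).
  { apply (gmul_compat _ HG); [apply (geq_refl _ HG)|apply (geq_sym _ HG), (gmul_Vl _ HG x)]. }
  eapply (geq_trans _ HG); [apply (geq_sym _ HG), (gmul_assoc _ HG)|].
  eapply (geq_trans _ HG); [|apply (gmul_1l _ HG)].
  apply (gmul_compat _ HG); [apply (gmul_Vl _ HG)|apply (geq_refl _ HG)].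
Qed.

Lemma ginv_nontrivial x : ~ geq G x (gone G) -> ~ geq G (ginv G x) (gone G).
Proof.
  intros Hx Hinv. apply Hx.
  eapply (geq_trans _ HG); [apply (geq_sym _ HG), (gmul_1r _ HG)|].
  eapply (geq_trans _ HG); [|apply (gmul_Vr _ HG x)].
  apply (gmul_compat _ HG); [apply (geq_refl _ HG)|apply (geq_sym _ HG), Hinv].
Qed.
End GroupFacts.

Section FreeProductInverse.
Context {I : Type} {F : I -> GrpData} (HF : forall i, is_group (F i)).

Definition winv (l : list (fletter I F)) : list (fletter I F) := rev (map finv_letter l).

Lemma winv_app l1 l2 : winv (l1 ++ l2) = winv l2 ++ winv l1.
Proof. unfold winv. now rewrite map_app, rev_app_distr. Qed.

Lemma fpeq_winv_letter_l (a : fletter I F) : fpeq [finv_letter a; a] [].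
Proof.
  destruct a as [i x]; simpl. eapply fpeq_trans; [apply fpeq_sym, fpeq_letter_mul|].
  eapply fpeq_trans; [apply fpeq_letter_geq, (gmul_Vl _ (HF i))|apply fpeq_letter_one].
Qed.

Lemma fpeq_winv_letter_r (a : fletter I F) : fpeq [a; finv_letter a] [].
Proof.
  destruct a as [i x]; simpl. eapply fpeq_trans; [apply fpeq_sym, fpeq_letter_mul|].
  eapply fpeq_trans; [apply fpeq_letter_geq, (gmul_Vr _ (HF i))|apply fpeq_letter_one].
Qed.

Lemma fpeq_winv_l l : fpeq (winv l ++ l) [].
Proof.
  induction l as [|a l IH]; simpl; [apply fpeq_refl|].
  unfold winv in *; simpl. rewrite <- app_assoc. simpl.
  eapply fpeq_trans; [|exact IH].
  apply (fpeq_in_context (rev (map finv_letter l)) l [finv_letter a; a] []), fpeq_winv_letter_l.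
Qed.

Lemma fpeq_winv_r l : fpeq (l ++ winv l) [].
Proof.
  induction l as [|a l IH] using rev_ind; simpl; [apply fpeq_refl|].
  unfold winv in *; rewrite map_app, rev_app_distr. simpl.
  replace ((l ++ [a]) ++ finv_letter a :: rev (map finv_letter l)) with
    (l ++ [a; finv_letter a] ++ rev (map finv_letter l)) by now rewrite <- app_assoc.
  eapply fpeq_trans; [apply fpeq_in_context, fpeq_winv_letter_r|exact IH].
Qed.

Lemma winv_involutive l : fpeq (winv (winv l)) l.
Proof.
  unfold winv. rewrite map_rev, rev_involutive, map_map.
  induction l as [|[i x] l IH]; simpl; [apply fpeq_refl|].
  apply (fpeq_app [_] [_]); auto. apply fpeq_letter_geq, ginv_involutive, HF.
Qed.

Lemma fpeq_winv u v : fpeq u v -> fpeq (winv u) (winv v).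
Proof.
  intros H. apply fpeq_trans with (winv u ++ (v ++ winv v)).
  - rewrite <- (app_nil_r (winv u)) at 1.
    apply fpeq_app; [apply fpeq_refl|apply fpeq_sym, fpeq_winv_r].
  - rewrite app_assoc. rewrite <- (app_nil_l (winv v)) at 2.
    apply fpeq_app; [|apply fpeq_refl].
    eapply fpeq_trans; [apply fpeq_app; [apply fpeq_refl|apply fpeq_sym, H]|apply fpeq_winv_l].
Qed.

Lemma fpeq_delete_middle a c b : fpeq ((a ++ c ++ b) ++ winv (a ++ b)) (a ++ c ++ winv a).
Proof.
  rewrite winv_app, <- !app_assoc. do 2 (apply fpeq_app; [apply fpeq_refl|]).
  rewrite app_assoc. rewrite <- (app_nil_l (winv a)) at 2.
  apply fpeq_app; [apply fpeq_winv_r|apply fpeq_refl].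
Qed.

Lemma FreeProd_is_group : is_group (FreeProd I F).
Proof.
  split; simpl.
  - apply fpeq_refl.
  - apply fpeq_sym.
  - apply fpeq_trans.
  - intros; now apply fpeq_app.
  - apply fpeq_winv.
  - intros. rewrite app_assoc. apply fpeq_refl.
  - intros. apply fpeq_refl.
  - intros. rewrite app_nil_r. apply fpeq_refl.
  - apply fpeq_winv_l.
  - apply fpeq_winv_r.
Qed.
End FreeProductInverse.

(** * Strongly sorted lists *)

Definition asbool (P : Prop) : bool := if excluded_middle_informative P then true else false.

Lemma asboolP P : Bool.reflect P (asbool P).
Proof. unfold asbool; destruct excluded_middle_informative; now constructor. Qed.

Lemma StronglySorted_map {A B} (R : B -> B -> Prop) (f : A -> B) l :
  StronglySorted R (map f l) <-> StronglySorted (fun a b => R (f a) (f b)) l.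
Proof.
  induction l as [|a l IH]; simpl; split; intros H; try constructor;
    apply StronglySorted_inv in H as [H1 H2].
  - now apply IH.
  - now rewrite Forall_map in H2.
  - now apply IH.
  - now rewrite Forall_map.
Qed.

Lemma StronglySorted_filter {A} (R : A -> A -> Prop) (f : A -> bool) l :
  StronglySorted R l -> StronglySorted R (filter f l).
Proof.
  induction l as [|a l IH]; simpl; intros H; [constructor|].
  apply StronglySorted_inv in H as [H1 H2].
  destruct (f a); auto. constructor; auto.
  rewrite Forall_forall in *. intros x Hx. apply filter_In in Hx. now apply H2.
Qed.

Lemma StronglySorted_app {A} (R : A -> A -> Prop) l1 l2 :
  StronglySorted R l1 -> StronglySorted R l2 ->
  (forall a b, In a l1 -> In b l2 -> R a b) -> StronglySorted R (l1 ++ l2).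
Proof.
  induction l1 as [|a l1 IH]; simpl; intros H1 H2 H; auto.
  apply StronglySorted_inv in H1 as [H1a H1b]. constructor; auto.
  rewrite Forall_forall in *. intros x Hx. apply in_app_or in Hx as [Hx|Hx]; auto.
Qed.

Lemma StronglySorted_rev {A} (R : A -> A -> Prop) l :
  StronglySorted R l -> StronglySorted (fun a b => R b a) (rev l).
Proof.
  induction l as [|a l IH]; simpl; intros H; [constructor|].
  apply StronglySorted_inv in H as [H1 H2]. apply StronglySorted_app; auto.
  - repeat constructor.
  - intros x y Hx [<-|[]]. apply in_rev in Hx. rewrite Forall_forall in H2. auto.
Qed.

Lemma StronglySorted_flat_map {A B} (R : B -> B -> Prop) (Q : A -> A -> Prop) (f : A -> list B) l :
  StronglySorted Q l -> (forall a, In a l -> StronglySorted R (f a)) ->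
  (forall a a' b b', Q a a' -> In b (f a) -> In b' (f a') -> R b b') ->
  StronglySorted R (flat_map f l).
Proof.
  induction l as [|a l IH]; simpl; intros H1 H2 H3; [constructor|].
  apply StronglySorted_inv in H1 as [H1a H1b]. rewrite Forall_forall in H1b.
  apply StronglySorted_app; auto.
  intros b b' Hb Hb'. apply in_flat_map in Hb' as [a' [Ha' Hb']]. eauto.
Qed.

Section SortedEnumeration.
Context {A : Type} (R : A -> A -> Prop) (R_irrefl : forall x, ~ R x x)
  (R_trans : forall x y z, R x y -> R y z -> R x z)
  (R_total : forall x y, x = y \/ R x y \/ R y x).

Fixpoint sorted_insert x l :=
  match l with
  | [] => [x]
  | a :: t => if asbool (x = a) then l else if asbool (R x a) then x :: l
              else a :: sorted_insert x t
  end.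

Lemma in_sorted_insert x l y : In y (sorted_insert x l) <-> y = x \/ In y l.
Proof.
  induction l as [|a t IH]; simpl; [split; intros [H|[]]; auto|].
  destruct (asboolP (x = a)) as [<-|_]; [simpl; intuition congruence|].
  destruct (asbool (R x a)); simpl; rewrite ?IH; intuition congruence.
Qed.

Lemma StronglySorted_sorted_insert x l :
  StronglySorted R l -> StronglySorted R (sorted_insert x l).
Proof.
  induction l as [|a t IH]; simpl; intros H; [repeat constructor|].
  apply StronglySorted_inv in H as [H1 H2]. rewrite Forall_forall in H2.
  destruct (asboolP (x = a)) as [_|Hxa]; [constructor; auto; now rewrite Forall_forall|].
  destruct (asboolP (R x a)) as [Hxa'|Hxa'].
  - constructor; [constructor; auto; now rewrite Forall_forall|].
    rewrite Forall_forall. intros y [<-|Hy]; eauto.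
  - assert (R a x) by (destruct (R_total x a) as [|[|]]; tauto).
    constructor; auto. rewrite Forall_forall.
    intros y Hy. apply in_sorted_insert in Hy as [->|Hy]; auto.
Qed.

Lemma exists_sorted_enum l : exists s, StronglySorted R s /\ forall y, In y s <-> In y l.
Proof.
  induction l as [|a l [s [H1 H2]]].
  - exists []. split; [constructor|tauto].
  - exists (sorted_insert a s). split; [now apply StronglySorted_sorted_insert|].
    intros y. rewrite in_sorted_insert, H2. simpl. intuition.
Qed.

Lemma StronglySorted_unique s1 s2 : StronglySorted R s1 -> StronglySorted R s2 ->
  (forall y, In y s1 <-> In y s2) -> s1 = s2.
Proof.
  revert s2. induction s1 as [|a t1 IH]; intros [|b t2] H1 H2 E.
  - reflexivity.
  - exfalso. apply (E b). now left.
  - exfalso. apply (E a). now left.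
  - apply StronglySorted_inv in H1 as [H1a H1b]. apply StronglySorted_inv in H2 as [H2a H2b].
    rewrite Forall_forall in *.
    assert (a = b).
    { destruct (proj1 (E a) (or_introl eq_refl)) as [|Ha]; auto.
      destruct (proj2 (E b) (or_introl eq_refl)) as [|Hb]; auto.
      exfalso. apply (R_irrefl a). eauto. }
    subst b. f_equal. apply IH; auto. intros y. split; intros Hy.
    + destruct (proj1 (E y) (or_intror Hy)); auto. subst. exfalso; eapply R_irrefl; eauto.
    + destruct (proj2 (E y) (or_intror Hy)); auto. subst. exfalso; eapply R_irrefl; eauto.
Qed.

Lemma filter_app_sorted (Q Q1 Q2 : A -> bool) l : StronglySorted R l ->
  (forall x, Q x = true <-> Q1 x = true \/ Q2 x = true) ->
  (forall x y, Q1 x = true -> Q2 y = true -> R x y) ->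
  filter Q l = filter Q1 l ++ filter Q2 l.
Proof.
  intros Hs HQ Hord. apply StronglySorted_unique; [now apply StronglySorted_filter| |].
  - apply StronglySorted_app; try now apply StronglySorted_filter.
    intros x y Hx Hy. apply filter_In in Hx, Hy. now apply Hord.
  - intros y. rewrite in_app_iff, !filter_In, HQ. tauto.
Qed.
End SortedEnumeration.

(** * Restrictions of infinite words *)

Lemma flat_map_singleton {A B} (f : A -> B) l : flat_map (fun a => [f a]) l = map f l.
Proof. induction l; simpl; congruence. Qed.

Lemma list_sig_of_forall {A} (Q : A -> Prop) (l : list A) :
  (forall x, In x l -> Q x) -> exists l' : list {x | Q x}, map (@proj1_sig _ _) l' = l.
Proof.
  induction l as [|a l IH]; intros H; [now exists []|].
  destruct IH as [l' E]; [intros; apply H; simpl; auto|].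
  exists (exist _ a (H a (or_introl eq_refl)) :: l'). simpl. congruence.
Qed.

Definition bounded (p : nat -> bool) : Prop := exists M, forall n, p n = true -> n < M.

Definition below (m : nat) : nat -> bool := fun n => n <? m.

Lemma bounded_below m : bounded (below m).
Proof. exists m. intros n H. now apply Nat.ltb_lt. Qed.

Section Restriction.
Context {G : nat -> GrpData}.

Definition letter_of (w : IWord G) (x : iL w) : fletter nat G := existT _ (iidx w x) (iletter w x).

Definition restr_enum (w : IWord G) (p : nat -> bool) (s : list (iL w)) : Prop :=
  StronglySorted (ilt w) s /\ forall x, In x s <-> p (iidx w x) = true.

Lemma positions_below (w : IWord G) M : exists l, forall x, iidx w x < M -> In x l.
Proof.
  induction M as [|M [l IH]]; [exists []; intros; lia|].
  destruct (ifinite G w M) as [l' H']. exists (l' ++ l). intros x Hx.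
  apply in_or_app. destruct (Nat.eq_dec (iidx w x) M); [left; auto|right; apply IH; lia].
Qed.

Lemma restr_enum_exists w p : bounded p -> exists s, restr_enum w p s.
Proof.
  intros [M HM]. destruct (positions_below w M) as [l Hl].
  destruct (exists_sorted_enum (ilt w) (ilt_trans G w) (ilt_total G w)
              (filter (fun x => p (iidx w x)) l)) as [s [H1 H2]].
  exists s. split; auto. intros x. rewrite H2, filter_In. intuition.
Qed.

Lemma restr_enum_unique w p s1 s2 : restr_enum w p s1 -> restr_enum w p s2 -> s1 = s2.
Proof.
  intros [H1 H2] [H3 H4]. apply (StronglySorted_unique (ilt w) (ilt_irrefl G w) (ilt_trans G w)); auto.
  intros y. rewrite H2, H4. tauto.
Qed.

Lemma restr_enum_filter w p q s : restr_enum w p s -> (forall n, q n = true -> p n = true) ->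
  restr_enum w q (filter (fun x => q (iidx w x)) s).
Proof.
  intros [H1 H2] Hq. split; [now apply StronglySorted_filter|].
  intros x. rewrite filter_In, H2. intuition.
Qed.

Definition lift_letter m (a : fletter {n : nat | n < m} (Gfam G m)) : fletter nat G :=
  existT (fun n => car (G n)) (proj1_sig (projT1 a)) (projT2 a).

Definition lower_letter m (a : fletter nat G) : list (fletter {n : nat | n < m} (Gfam G m)) :=
  match lt_dec (projT1 a) m with
  | left h => [existT (fun i => car (Gfam G m i)) (exist (fun n => n < m) (projT1 a) h) (projT2 a)]
  | right _ => []
  end.

Lemma lower_lift_letter m u : flat_map (lower_letter m) (map (lift_letter m) u) = u.
Proof.
  induction u as [|[[n h0] x] u IH]; simpl; auto.
  rewrite IH. unfold lower_letter; simpl. destruct (lt_dec n m) as [h|h]; [|lia].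
  now replace h with h0 by apply proof_irrelevance.
Qed.

Lemma fpeq_lift_letter_iff m u v :
  fpeq u v <-> fpeq (map (lift_letter m) u) (map (lift_letter m) v).
Proof.
  split; intros H.
  - rewrite <- !flat_map_singleton.
    exact (fpeq_flat_map_subst _ (subst_compat_reindex (F' := G) (@proj1_sig _ _)) _ _ H).
  - rewrite <- (lower_lift_letter m u), <- (lower_lift_letter m v).
    apply fpeq_flat_map_subst; auto.
    split; intros i; unfold lower_letter; simpl; destruct (lt_dec i m); intros;
      try apply fpeq_refl.
    + now apply (fpeq_letter_geq (F := Gfam G m)).
    + apply (fpeq_letter_mul (F := Gfam G m)).
    + apply (fpeq_letter_one (F := Gfam G m)).
Qed.

Lemma restr_word_of_enum w m s :
  restr_enum w (below m) s -> exists s' : list {x : iL w | iidx w x < m},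
    map (@proj1_sig _ _) s' = s /\ restr_word G w m (map (rletter G w m) s').
Proof.
  intros [Hs Hin]. destruct (list_sig_of_forall (fun x => iidx w x < m) s) as [s' E].
  { intros x Hx. now apply Nat.ltb_lt, Hin. }
  exists s'. split; auto. exists s'. repeat split.
  - apply StronglySorted_map. now rewrite E.
  - intros x Hx. rewrite E. now apply Hin, Nat.ltb_lt.
Qed.

Lemma enum_of_restr_word w m (s : list {x : iL w | iidx w x < m}) :
  StronglySorted (fun p q => ilt w (proj1_sig p) (proj1_sig q)) s ->
  (forall x, iidx w x < m -> In x (map (@proj1_sig _ _) s)) ->
  restr_enum w (below m) (map (@proj1_sig _ _) s).
Proof.
  intros Hs Hin. split; [now apply StronglySorted_map|].
  intros x. unfold below. rewrite Nat.ltb_lt. split; auto.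
  intros Hx. apply in_map_iff in Hx as [y [<- _]]. apply (proj2_sig y).
Qed.

Lemma tpeq_iff_enum w v : tpeq w v <-> forall m s1 s2,
  restr_enum w (below m) s1 -> restr_enum v (below m) s2 ->
  fpeq (map (letter_of w) s1) (map (letter_of v) s2).
Proof.
  split.
  - intros H m s1 s2 H1 H2.
    destruct (restr_word_of_enum w m s1 H1) as [s1' [<- R1]].
    destruct (restr_word_of_enum v m s2 H2) as [s2' [<- R2]].
    pose proof (proj1 (fpeq_lift_letter_iff m _ _) (H m _ _ R1 R2)) as K.
    rewrite !map_map in K |- *. exact K.
  - intros H m u1 u2 [s1 [A1 [B1 ->]]] [s2 [A2 [B2 ->]]].
    apply (fpeq_lift_letter_iff m). rewrite !map_map.
    assert (K := H m _ _ (enum_of_restr_word w m s1 A1 B1) (enum_of_restr_word v m s2 A2 B2)).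
    now rewrite !map_map in K.
Qed.
End Restriction.

Section CanonicalRestriction.
Context {G : nat -> GrpData}.

(* For unbounded [p] there is no enumeration and [restr w p] is the junk value [[]]. *)
Definition restr (w : IWord G) (p : nat -> bool) : list (fletter nat G) :=
  match excluded_middle_informative (exists s, restr_enum w p s) with
  | left h => map (letter_of w) (proj1_sig (constructive_indefinite_description _ h))
  | right _ => []
  end.

Lemma restr_spec w p s : restr_enum w p s -> restr w p = map (letter_of w) s.
Proof.
  intros H. unfold restr. destruct excluded_middle_informative as [h|h]; [|exfalso; eauto].
  destruct constructive_indefinite_description as [s' H']. simpl.
  f_equal. eapply restr_enum_unique; eauto.
Qed.

Lemma tpeq_iff_restr (w v : IWord G) :
  tpeq w v <-> forall m, fpeq (restr w (below m)) (restr v (below m)).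
Proof.
  rewrite tpeq_iff_enum. split.
  - intros H m.
    destruct (restr_enum_exists w _ (bounded_below m)) as [s1 H1].
    destruct (restr_enum_exists v _ (bounded_below m)) as [s2 H2].
    rewrite (restr_spec _ _ _ H1), (restr_spec _ _ _ H2). eauto.
  - intros H m s1 s2 H1 H2. specialize (H m).
    now rewrite (restr_spec _ _ _ H1), (restr_spec _ _ _ H2) in H.
Qed.

Lemma restr_filter w p q : bounded p -> (forall n, q n = true -> p n = true) ->
  restr w q = filter_index q (restr w p).
Proof.
  intros Hp Hq. destruct (restr_enum_exists w p Hp) as [s H].
  rewrite (restr_spec _ _ _ H), (restr_spec _ _ _ (restr_enum_filter _ _ _ _ H Hq)).
  unfold filter_index. clear. induction s as [|a s IH]; simpl; auto.
  destruct (q (iidx w a)); simpl; now rewrite IH.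
Qed.

Lemma fpeq_restr_of_tpeq w v p : tpeq w v -> bounded p -> fpeq (restr w p) (restr v p).
Proof.
  intros H [M HM]. rewrite tpeq_iff_restr in H.
  assert (Hq : forall n, p n = true -> below M n = true) by (intros; now apply Nat.ltb_lt, HM).
  rewrite (restr_filter w (below M) p), (restr_filter v (below M) p); auto using bounded_below.
  apply fpeq_filter_index, H.
Qed.

Lemma restr_tmul w1 w2 p : bounded p -> restr (tmul w1 w2) p = restr w1 p ++ restr w2 p.
Proof.
  intros Hp. destruct (restr_enum_exists w1 p Hp) as [s1 [A1 B1]].
  destruct (restr_enum_exists w2 p Hp) as [s2 [A2 B2]].
  rewrite (restr_spec w1 p s1), (restr_spec w2 p s2) by now split.
  rewrite (restr_spec (tmul w1 w2) p (map inl s1 ++ map inr s2)).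
  { now rewrite map_app, !map_map. }
  split.
  - apply StronglySorted_app; try now apply StronglySorted_map.
    intros a b Ha Hb. apply in_map_iff in Ha as [? [<- _]]. apply in_map_iff in Hb as [? [<- _]].
    exact I.
  - intros [x|x]; simpl; rewrite in_app_iff, !in_map_iff; [rewrite <- B1|rewrite <- B2];
      split; firstorder congruence.
Qed.

Lemma restr_tone p : restr tone p = [].
Proof. rewrite (restr_spec tone p []); auto. split; [constructor|intros []]. Qed.

Lemma restr_tinv (HG : forall n, is_group (G n)) w p :
  bounded p -> restr (tinv w) p = winv (restr w p).
Proof.
  intros Hp. destruct (restr_enum_exists w p Hp) as [s [A1 B1]].
  rewrite (restr_spec w p s) by now split.
  destruct (list_sig_of_forall
    (fun x => ~ geq (G (iidx w x)) (ginv _ (iletter w x)) (gone (G (iidx w x)))) s) as [s' E].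
  { intros x _. apply ginv_nontrivial, iletter_nontriv. apply HG. }
  rewrite (restr_spec (tinv w) p (rev s')).
  { unfold winv. rewrite <- E, map_rev, !map_map. reflexivity. }
  split.
  - apply (StronglySorted_rev (fun a b : vL G w => ilt w (proj1_sig a) (proj1_sig b))).
    rewrite <- E in A1. exact (proj1 (StronglySorted_map (ilt w) _ s') A1).
  - intros x. rewrite <- in_rev. simpl. unfold vidx. rewrite <- B1, <- E, in_map_iff.
    split; [eauto|]. intros [y [Ey Hy]]. now replace x with y by now apply vL_eq.
Qed.
End CanonicalRestriction.

Ltac simpl_restr :=
  repeat first
    [ rewrite restr_tmul by apply bounded_below
    | rewrite restr_tinv by first [assumption | apply bounded_below]
    | rewrite restr_tone ].

(** * The topologist's product and the archipelago group *)

Section TopologistsProduct.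
Context {G : nat -> GrpData} (HG : forall n, is_group (G n)).

Lemma tpeq_refl (w : IWord G) : tpeq w w.
Proof. apply tpeq_iff_restr. intros; apply fpeq_refl. Qed.

Lemma tpeq_sym (w v : IWord G) : tpeq w v -> tpeq v w.
Proof. rewrite !tpeq_iff_restr. intros H m. now apply fpeq_sym. Qed.

Lemma tpeq_trans (w v u : IWord G) : tpeq w v -> tpeq v u -> tpeq w u.
Proof. rewrite !tpeq_iff_restr. intros H1 H2 m. eapply fpeq_trans; eauto. Qed.

Lemma tmul_compat (a a' b b' : IWord G) : tpeq a a' -> tpeq b b' -> tpeq (tmul a b) (tmul a' b').
Proof. rewrite !tpeq_iff_restr. intros H1 H2 m. simpl_restr. now apply fpeq_app. Qed.

Lemma tinv_compat (a a' : IWord G) : tpeq a a' -> tpeq (tinv a) (tinv a').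
Proof. rewrite !tpeq_iff_restr. intros H m. simpl_restr. now apply fpeq_winv. Qed.

Lemma tmul_assoc (a b c : IWord G) : tpeq (tmul (tmul a b) c) (tmul a (tmul b c)).
Proof. apply tpeq_iff_restr. intros m. simpl_restr. rewrite app_assoc. apply fpeq_refl. Qed.

Lemma tmul_1l (a : IWord G) : tpeq (tmul tone a) a.
Proof. apply tpeq_iff_restr. intros m. simpl_restr. apply fpeq_refl. Qed.

Lemma tmul_1r (a : IWord G) : tpeq (tmul a tone) a.
Proof. apply tpeq_iff_restr. intros m. simpl_restr. rewrite app_nil_r. apply fpeq_refl. Qed.

Lemma tmul_Vl (a : IWord G) : tpeq (tmul (tinv a) a) tone.
Proof. apply tpeq_iff_restr. intros m. simpl_restr. now apply fpeq_winv_l. Qed.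

Lemma tmul_Vr (a : IWord G) : tpeq (tmul a (tinv a)) tone.
Proof. apply tpeq_iff_restr. intros m. simpl_restr. now apply fpeq_winv_r. Qed.

Lemma tinv_tmul (a b : IWord G) : tpeq (tinv (tmul a b)) (tmul (tinv b) (tinv a)).
Proof. apply tpeq_iff_restr. intros m. simpl_restr. rewrite winv_app. apply fpeq_refl. Qed.

Lemma tinv_involutive (a : IWord G) : tpeq (tinv (tinv a)) a.
Proof. apply tpeq_iff_restr. intros m. simpl_restr. now apply winv_involutive. Qed.

Lemma tinv_tone : tpeq (tinv (@tone G)) tone.
Proof. apply tpeq_iff_restr. intros m. simpl_restr. apply fpeq_refl. Qed.

Lemma finite_word_tinv (s : IWord G) : finite_word G s -> finite_word G (tinv s).
Proof.
  intros [l Hl].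
  destruct (list_sig_of_forall
    (fun x => ~ geq (G (iidx s x)) (ginv _ (iletter s x)) (gone (G (iidx s x)))) l) as [l' E].
  { intros x _. apply ginv_nontrivial, iletter_nontriv. apply HG. }
  exists l'. intros y. assert (K := Hl (proj1_sig y)). rewrite <- E in K.
  apply in_map_iff in K as [z [Ez Hz]]. now replace y with z by now apply vL_eq.
Qed.
End TopologistsProduct.

Section NormalClosure.
Context {G : nat -> GrpData} (HG : forall n, is_group (G n)).

Definition conj_product (l : list (IWord G * IWord G)) : IWord G :=
  fold_right tmul tone (map (fun p => tconj G (fst p) (snd p)) l).

Lemma in_nclosure_tpeq x y : in_nclosure G x -> tpeq x y -> in_nclosure G y.
Proof.
  intros [l [H1 H2]] H. exists l. split; auto.
  eapply tpeq_trans; eauto. now apply tpeq_sym.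
Qed.

Lemma in_nclosure_tone : in_nclosure G tone.
Proof. exists []. split; [intros _ []|apply tpeq_refl]. Qed.

Lemma conj_product_app l1 l2 :
  tpeq (conj_product (l1 ++ l2)) (tmul (conj_product l1) (conj_product l2)).
Proof.
  induction l1 as [|a l1 IH]; simpl.
  - apply tpeq_sym, tmul_1l.
  - eapply tpeq_trans; [|apply tpeq_sym, tmul_assoc].
    apply tmul_compat; [apply tpeq_refl|exact IH].
Qed.

Lemma in_nclosure_tmul x y : in_nclosure G x -> in_nclosure G y -> in_nclosure G (tmul x y).
Proof.
  intros [l1 [A1 B1]] [l2 [A2 B2]]. exists (l1 ++ l2). split.
  - intros p Hp. apply in_app_or in Hp as [|]; auto.
  - fold (conj_product (l1 ++ l2)). eapply tpeq_trans; [|apply tpeq_sym, conj_product_app].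
    now apply tmul_compat.
Qed.

Lemma in_nclosure_tconj g s : finite_word G s -> in_nclosure G (tconj G g s).
Proof.
  intros H. exists [(g, s)]. split; [intros p [<-|[]]; auto|].
  apply tpeq_sym, tmul_1r.
Qed.

Lemma tinv_tconj g s : tpeq (tinv (tconj G g s)) (tconj G g (tinv s)).
Proof.
  apply tpeq_iff_restr. intros m. unfold tconj. simpl_restr.
  rewrite !winv_app, app_assoc. apply fpeq_app; [|apply fpeq_refl].
  apply fpeq_app; [now apply winv_involutive|apply fpeq_refl].
Qed.

Lemma in_nclosure_tinv x : in_nclosure G x -> in_nclosure G (tinv x).
Proof.
  intros [l [A1 B1]]. apply in_nclosure_tpeq with (tinv (conj_product l)).
  2:{ now apply (tinv_compat HG), tpeq_sym. }
  clear B1. induction l as [|[g s] l IH]; simpl.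
  - eapply in_nclosure_tpeq; [apply in_nclosure_tone|apply tpeq_sym, (tinv_tone HG)].
  - eapply in_nclosure_tpeq; [|apply tpeq_sym, (tinv_tmul HG)].
    apply in_nclosure_tmul.
    + apply IH. intros; apply A1; simpl; auto.
    + eapply in_nclosure_tpeq; [|apply tpeq_sym, tinv_tconj].
      apply in_nclosure_tconj, (finite_word_tinv HG), (A1 (g, s)); simpl; auto.
Qed.

Lemma aeq_of_tpeq (x y : IWord G) : tpeq x y -> aeq x y.
Proof.
  intros H. eapply in_nclosure_tpeq; [apply in_nclosure_tone|].
  rewrite tpeq_iff_restr in *. intros m. simpl_restr. apply fpeq_sym.
  eapply fpeq_trans; [apply fpeq_app; [apply H|apply fpeq_refl]|now apply fpeq_winv_r].
Qed.

Lemma aeq_sym (x y : IWord G) : aeq x y -> aeq y x.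
Proof.
  intros H. apply in_nclosure_tinv in H. eapply in_nclosure_tpeq; eauto.
  eapply tpeq_trans; [apply (tinv_tmul HG)|].
  apply tmul_compat; [apply (tinv_involutive HG)|apply tpeq_refl].
Qed.

Lemma aeq_trans (x y z : IWord G) : aeq x y -> aeq y z -> aeq x z.
Proof.
  intros H1 H2. eapply in_nclosure_tpeq; [apply (in_nclosure_tmul _ _ H1 H2)|].
  apply tpeq_iff_restr. intros m. simpl_restr. rewrite <- !app_assoc.
  apply fpeq_app; [apply fpeq_refl|]. rewrite app_assoc.
  rewrite <- (app_nil_l (winv (restr z _))) at 2.
  apply fpeq_app; [now apply fpeq_winv_l|apply fpeq_refl].
Qed.
End NormalClosure.

Record word_hom {G H : nat -> GrpData} (phi : IWord G -> IWord H) : Prop := {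
  word_hom_tpeq : forall x y, tpeq x y -> tpeq (phi x) (phi y);
  word_hom_tmul : forall x y, tpeq (phi (tmul x y)) (tmul (phi x) (phi y));
  word_hom_tone : tpeq (phi tone) tone;
  word_hom_finite : forall x, finite_word G x -> finite_word H (phi x) }.

Section WordHom.
Context {G H : nat -> GrpData} (HG : forall n, is_group (G n)) (HH : forall n, is_group (H n)).
Context (phi : IWord G -> IWord H) (Hphi : word_hom phi).

Lemma word_hom_tinv x : tpeq (phi (tinv x)) (tinv (phi x)).
Proof.
  destruct Hphi as [Hresp Hmul Hone _].
  apply tpeq_trans with (tmul (phi (tinv x)) (tmul (phi x) (tinv (phi x)))).
  { apply tpeq_sym. eapply tpeq_trans; [|apply tmul_1r].
    apply tmul_compat; [apply tpeq_refl|apply (tmul_Vr HH)]. }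
  eapply tpeq_trans; [apply tpeq_sym, tmul_assoc|].
  eapply tpeq_trans; [|apply tmul_1l]. apply tmul_compat; [|apply tpeq_refl].
  eapply tpeq_trans; [apply tpeq_sym, Hmul|].
  eapply tpeq_trans; [|apply Hone]. apply Hresp, (tmul_Vl HG).
Qed.

Lemma word_hom_tconj g s : tpeq (phi (tconj G g s)) (tconj H (phi g) (phi s)).
Proof.
  unfold tconj. eapply tpeq_trans; [apply (word_hom_tmul _ Hphi)|].
  apply tmul_compat; [apply (word_hom_tmul _ Hphi)|apply word_hom_tinv].
Qed.

Lemma word_hom_nclosure x : in_nclosure G x -> in_nclosure H (phi x).
Proof.
  intros [l [Hfin Hx]]. destruct Hphi as [Hresp Hmul Hone Hfinite].
  exists (map (fun p => (phi (fst p), phi (snd p))) l). split.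
  - intros p Hp. apply in_map_iff in Hp as [q [<- Hq]]. now apply Hfinite, Hfin.
  - eapply tpeq_trans; [apply Hresp, Hx|]. clear Hfin Hx.
    induction l as [|[g s] l IH]; simpl; [exact Hone|].
    eapply tpeq_trans; [apply Hmul|]. apply tmul_compat; [apply word_hom_tconj|exact IH].
Qed.

Lemma word_hom_aeq x y : aeq x y -> aeq (phi x) (phi y).
Proof.
  intros K. apply word_hom_nclosure in K. eapply in_nclosure_tpeq; eauto.
  eapply tpeq_trans; [apply (word_hom_tmul _ Hphi)|].
  apply tmul_compat; [apply tpeq_refl|apply word_hom_tinv].
Qed.
End WordHom.

Lemma arch_isomorphic_of_word_homs {G H : nat -> GrpData}
    (HG : forall n, is_group (G n)) (HH : forall n, is_group (H n))
    (phi : IWord G -> IWord H) (psi : IWord H -> IWord G) :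
  word_hom phi -> word_hom psi ->
  (forall x, aeq (psi (phi x)) x) -> (forall z, aeq (phi (psi z)) z) ->
  arch_isomorphic G H.
Proof.
  intros Hphi Hpsi Hpsi_phi Hphi_psi. exists phi. split; [|split; [|split]].
  - now apply word_hom_aeq.
  - intros x y. apply (aeq_of_tpeq HH), (word_hom_tmul _ Hphi).
  - intros x y K. apply (word_hom_aeq HH HG psi Hpsi) in K.
    apply (aeq_trans HG) with (psi (phi x)); [apply (aeq_sym HG), Hpsi_phi|].
    apply (aeq_trans HG) with (psi (phi y)); auto.
  - intros z. exists (psi z). auto.
Qed.

(** * Letterwise substitutions *)

Lemma flat_map_ext_in {A B} (f g : A -> list B) l :
  (forall a, In a l -> f a = g a) -> flat_map f l = flat_map g l.
Proof. induction l as [|a l IH]; simpl; intros K; auto. rewrite K, IH; auto. Qed.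

Lemma map_flat_map {A B C} (f : B -> C) (g : A -> list B) l :
  map f (flat_map g l) = flat_map (fun a => map f (g a)) l.
Proof. induction l; simpl; auto. rewrite map_app; congruence. Qed.

Lemma flat_map_flat_map {A B C} (f : B -> list C) (g : A -> list B) l :
  flat_map f (flat_map g l) = flat_map (fun a => flat_map f (g a)) l.
Proof. induction l; simpl; auto. rewrite flat_map_app; congruence. Qed.

Lemma flat_map_map {A B C} (f : B -> list C) (g : A -> B) l :
  flat_map f (map g l) = flat_map (fun a => f (g a)) l.
Proof. induction l; simpl; auto; congruence. Qed.

Lemma flat_map_nth_seq {A B} (f : A -> list B) (l : list A) d :
  flat_map (fun j => f (nth j l d)) (seq 0 (length l)) = flat_map f l.
Proof.
  induction l as [|a l IH]; simpl; auto. f_equal.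
  rewrite <- seq_shift, flat_map_concat_map, map_map, <- IH, flat_map_concat_map.
  reflexivity.
Qed.

Lemma StronglySorted_seq s n : StronglySorted Peano.lt (seq s n).
Proof.
  revert s; induction n; intros s; simpl; constructor; auto.
  rewrite Forall_forall. intros x Hx. apply in_seq in Hx. lia.
Qed.

Lemma map_filter_index {A I} {F : I -> GrpData} (f : A -> fletter I F) (q : I -> bool) l :
  map f (filter (fun a => q (projT1 (f a))) l) = filter_index q (map f l).
Proof.
  induction l as [|a l IH]; simpl; auto.
  destruct (q (projT1 (f a))); simpl; now rewrite IH.
Qed.

Definition covers (src : nat -> list nat) (p p' : nat -> bool) : Prop :=
  forall n m, p n = true -> In m (src n) -> p' m = true.

Lemma covers_below src p : bounded p -> exists N, forall N', N <= N' -> covers src p (below N').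
Proof.
  intros [M HM]. exists (S (list_max (flat_map src (seq 0 M)))).
  intros N' HN' n m Hn Hm. apply Nat.ltb_lt.
  enough (m <= list_max (flat_map src (seq 0 M))) by lia.
  pose proof (proj1 (list_max_le (flat_map src (seq 0 M)) _) (le_n _)) as L.
  rewrite Forall_forall in L. apply L, in_flat_map. exists n. split; auto.
  apply in_seq. specialize (HM n Hn). lia.
Qed.

Section Expansion.
Context {G H : nat -> GrpData}.

Definition dummy_letter : fletter nat H := existT (fun n => car (H n)) 0 (gone (H 0)).

Definition nontrivial_letter (a : fletter nat H) : Prop :=
  ~ geq (H (projT1 a)) (projT2 a) (gone (H (projT1 a))).

Definition drop_trivial : list (fletter nat H) -> list (fletter nat H) :=
  flat_map (fun b => if asbool (nontrivial_letter b) then [b] else []).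

Lemma fpeq_drop_trivial l : fpeq (drop_trivial l) l.
Proof.
  induction l as [|[i x] l IH]; simpl; [apply fpeq_refl|].
  destruct (asboolP (nontrivial_letter (existT _ i x))) as [_|Htriv].
  - now apply fpeq_cons.
  - apply NNPP in Htriv. apply (fpeq_app [] [_]); auto.
    apply fpeq_sym. eapply fpeq_trans; [apply fpeq_letter_geq, Htriv|apply fpeq_letter_one].
Qed.

(* Each position [x] of [w] is replaced by the finite word [E x], dropping trivial
   letters (infinite words have none).  [src m] lists the source factors whose
   letters can land in the factor [m], which keeps the fibres finite. *)
Section ExpandWord.
Context (w : IWord G) (E : iL w -> list (fletter nat H)).
Context (src : nat -> list nat) (Hsrc : forall x b, In b (E x) -> In (iidx w x) (src (projT1 b))).

Definition expand_pos : Type :=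
  {x : iL w & {j : nat | j < length (E x) /\ nontrivial_letter (nth j (E x) dummy_letter)}}.

Definition expand_lt (a b : expand_pos) : Prop :=
  ilt w (projT1 a) (projT1 b) \/
  (projT1 a = projT1 b /\ proj1_sig (projT2 a) < proj1_sig (projT2 b)).

Definition expand_letter (a : expand_pos) : fletter nat H :=
  nth (proj1_sig (projT2 a)) (E (projT1 a)) dummy_letter.

Lemma expand_pos_eq (a b : expand_pos) :
  projT1 a = projT1 b -> proj1_sig (projT2 a) = proj1_sig (projT2 b) -> a = b.
Proof.
  destruct a as [x [j h]], b as [y [k h']]; simpl; intros -> ->.
  do 2 f_equal. apply proof_irrelevance.
Qed.

Lemma expand_lt_irrefl a : ~ expand_lt a a.
Proof. intros [K|[_ K]]; [eapply ilt_irrefl; eauto|lia]. Qed.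

Lemma expand_lt_trans a b c : expand_lt a b -> expand_lt b c -> expand_lt a c.
Proof.
  unfold expand_lt. intros [K1|[K1 K1']] [K2|[K2 K2']].
  - left. eapply ilt_trans; eauto.
  - left. now rewrite <- K2.
  - left. now rewrite K1.
  - right. split; [congruence|lia].
Qed.

Lemma expand_lt_total a b : a = b \/ expand_lt a b \/ expand_lt b a.
Proof.
  unfold expand_lt. destruct (ilt_total G w (projT1 a) (projT1 b)) as [K|[K|K]]; auto.
  destruct (lt_eq_lt_dec (proj1_sig (projT2 a)) (proj1_sig (projT2 b))) as [[K'|K']|K']; auto.
  left. now apply expand_pos_eq.
Qed.

Lemma expand_pos_countable : exists c : expand_pos -> nat, forall a b, c a = c b -> a = b.
Proof.
  destruct (iL_countable G w) as [c Hc].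
  exists (fun a => Cantor.to_nat (c (projT1 a), proj1_sig (projT2 a))). intros a b K.
  apply (f_equal Cantor.of_nat) in K. rewrite !Cantor.cancel_of_to in K.
  injection K; intros. apply expand_pos_eq; auto.
Qed.

Lemma expand_letter_nontriv a :
  nontrivial_letter (expand_letter a).
Proof. exact (proj2 (proj2_sig (projT2 a))). Qed.

Definition block_positions (x : iL w) : list expand_pos :=
  flat_map (fun j => match lt_dec j (length (E x)) with
     | left h1 => match excluded_middle_informative (nontrivial_letter (nth j (E x) dummy_letter)) with
         | left h2 => [existT _ x (exist _ j (conj h1 h2))]
         | right _ => []
         end
     | right _ => []
     end) (seq 0 (length (E x))).

Lemma in_block_positions (a : expand_pos) : In a (block_positions (projT1 a)).
Proof.
  destruct a as [x [j [h1 h2]]]. simpl. unfold block_positions. apply in_flat_map.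
  exists j. split; [apply in_seq; lia|].
  destruct (lt_dec j (length (E x))); [|lia].
  destruct excluded_middle_informative; [|tauto]. left. now apply expand_pos_eq.
Qed.

Lemma block_positions_fst x a : In a (block_positions x) -> projT1 a = x.
Proof.
  unfold block_positions. intros K. apply in_flat_map in K as [j [_ K]].
  destruct lt_dec; [|destruct K]. destruct excluded_middle_informative; [|destruct K].
  now destruct K as [<-|[]].
Qed.

Lemma StronglySorted_block_positions x : StronglySorted expand_lt (block_positions x).
Proof.
  unfold block_positions. apply StronglySorted_flat_map with (Q := Peano.lt).
  - apply StronglySorted_seq.
  - intros j _. destruct lt_dec; [destruct excluded_middle_informative|]; repeat constructor.
  - intros j j' b b' Hj K1 K2.
    destruct (lt_dec j (length (E x))); [|destruct K1].
    destruct excluded_middle_informative; [|destruct K1].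
    destruct (lt_dec j' (length (E x))); [|destruct K2].
    destruct excluded_middle_informative; [|destruct K2].
    destruct K1 as [<-|[]]. destruct K2 as [<-|[]]. right. simpl. auto.
Qed.

Lemma expand_finite n : exists s : list expand_pos, forall a, projT1 (expand_letter a) = n -> In a s.
Proof.
  assert (K : exists l : list (iL w), forall x, In (iidx w x) (src n) -> In x l).
  { clear Hsrc. induction (src n) as [|m sl [l IH]]; [exists []; intros x []|].
    destruct (ifinite G w m) as [l' Hl']. exists (l' ++ l).
    intros x [K|K]; apply in_or_app; auto. }
  destruct K as [l Hl]. exists (flat_map block_positions l). intros a Ha.
  apply in_flat_map. exists (projT1 a). split; [|apply in_block_positions].
  apply Hl. rewrite <- Ha. apply Hsrc. destruct a as [x [j [h1 h2]]]. now apply nth_In.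
Qed.

Definition expand_word : IWord H := {|
  iL := expand_pos; ilt := expand_lt; ilt_irrefl := expand_lt_irrefl;
  ilt_trans := expand_lt_trans; ilt_total := expand_lt_total;
  iL_countable := expand_pos_countable;
  iidx := fun a => projT1 (expand_letter a); iletter := fun a => projT2 (expand_letter a);
  iletter_nontriv := expand_letter_nontriv; ifinite := expand_finite |}.

Lemma finite_word_expand : finite_word G w -> finite_word H expand_word.
Proof.
  intros [l Hl]. exists (flat_map block_positions l). intros a. apply in_flat_map.
  exists (projT1 a). split; auto. apply in_block_positions.
Qed.

Lemma map_letter_of_block_positions x :
  map (letter_of expand_word) (block_positions x) = drop_trivial (E x).
Proof.
  unfold block_positions, drop_trivial. rewrite map_flat_map.
  rewrite <- (flat_map_nth_seq _ (E x) dummy_letter).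
  apply flat_map_ext_in. intros j Hj. apply in_seq in Hj.
  destruct (lt_dec j (length (E x))) as [h1|]; [|lia]. unfold asbool.
  destruct excluded_middle_informative as [h2|h2]; simpl; auto.
  f_equal. symmetry. apply sigT_eta.
Qed.

Lemma restr_enum_expand p p' s : restr_enum w p' s -> covers src p p' ->
  restr_enum expand_word p
    (flat_map (fun x => filter (fun a => p (projT1 (expand_letter a))) (block_positions x)) s).
Proof.
  intros [A1 B1] Hp. split.
  - apply StronglySorted_flat_map with (Q := ilt w); auto.
    + intros x _. apply StronglySorted_filter, StronglySorted_block_positions.
    + intros x x' b b' Hx K1 K2. apply filter_In in K1 as [K1 _], K2 as [K2 _].
      apply block_positions_fst in K1, K2. left. simpl. now rewrite K1, K2.
  - intros a. rewrite in_flat_map. split.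
    + intros [x [_ K]]. apply filter_In in K. apply K.
    + intros K. exists (projT1 a). split.
      * apply B1. eapply Hp; [apply K|]. apply Hsrc.
        destruct a as [x [j [h1 h2]]]. now apply nth_In.
      * apply filter_In. split; auto. apply in_block_positions.
Qed.

Lemma restr_expand p p' s : restr_enum w p' s -> covers src p p' ->
  restr expand_word p = filter_index p (drop_trivial (flat_map E s)).
Proof.
  intros K1 K2. rewrite (restr_spec _ _ _ (restr_enum_expand p p' s K1 K2)).
  unfold filter_index, drop_trivial. rewrite !flat_map_flat_map, map_flat_map.
  apply flat_map_ext_in. intros x _.
  transitivity (filter_index p (drop_trivial (E x))).
  - rewrite <- map_letter_of_block_positions. apply (map_filter_index (letter_of expand_word)).
  - unfold filter_index, drop_trivial. now rewrite flat_map_flat_map.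
Qed.
End ExpandWord.
End Expansion.

Lemma drop_trivial_letter_of {G : nat -> GrpData} (w : IWord G) l :
  drop_trivial (map (letter_of w) l) = map (letter_of w) l.
Proof.
  induction l as [|x l IH]; simpl; auto.
  destruct (asboolP (nontrivial_letter (letter_of w x))) as [_|N].
  - simpl. now f_equal.
  - exfalso. apply N, iletter_nontriv.
Qed.

Record letter_subst (G H : nat -> GrpData) : Type := {
  subst_fun :> fletter nat G -> list (fletter nat H);
  subst_src : nat -> list nat;
  subst_src_spec : forall a b, In b (subst_fun a) -> In (projT1 a) (subst_src (projT1 b));
  subst_fun_compat : subst_compat subst_fun }.

Arguments subst_src {G H} _ _.
Arguments subst_src_spec {G H} _ _ _ _.
Arguments subst_fun_compat {G H} _.

Section LetterSubst.
Context {G H : nat -> GrpData} (e : letter_subst G H).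

Definition subst_word (w : IWord G) : IWord H :=
  expand_word w (fun x => e (letter_of w x)) (subst_src e)
    (fun x b Hb => subst_src_spec e (letter_of w x) b Hb).

Lemma restr_subst_word w p p' : bounded p' -> covers (subst_src e) p p' ->
  restr (subst_word w) p = filter_index p (drop_trivial (flat_map e (restr w p'))).
Proof.
  intros Hp' Hcov. destruct (restr_enum_exists w p' Hp') as [s K].
  unfold subst_word. rewrite (restr_expand _ _ _ _ p p' s K Hcov), (restr_spec _ _ _ K).
  now rewrite flat_map_map.
Qed.

Lemma fpeq_restr_subst_word w p p' : bounded p' -> covers (subst_src e) p p' ->
  fpeq (restr (subst_word w) p) (filter_index p (flat_map e (restr w p'))).
Proof.
  intros Hp' Hcov. rewrite (restr_subst_word w p p' Hp' Hcov).
  apply fpeq_filter_index, fpeq_drop_trivial.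
Qed.

Lemma subst_word_hom : word_hom subst_word.
Proof.
  split.
  - intros x y K. apply tpeq_iff_restr. intros m.
    destruct (covers_below (subst_src e) _ (bounded_below m)) as [N HN].
    eapply fpeq_trans; [apply (fpeq_restr_subst_word x _ _ (bounded_below N) (HN N (le_n N)))|].
    eapply fpeq_trans;
      [|apply fpeq_sym, (fpeq_restr_subst_word y _ _ (bounded_below N) (HN N (le_n N)))].
    apply fpeq_filter_index, fpeq_flat_map_subst; [apply subst_fun_compat|].
    now apply fpeq_restr_of_tpeq, bounded_below.
  - intros x y. apply tpeq_iff_restr. intros m.
    destruct (covers_below (subst_src e) _ (bounded_below m)) as [N HN].
    rewrite restr_tmul by apply bounded_below.
    rewrite !(restr_subst_word _ _ _ (bounded_below N) (HN N (le_n N))).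
    rewrite restr_tmul by apply bounded_below.
    unfold drop_trivial. rewrite !flat_map_app, filter_index_app. apply fpeq_refl.
  - apply tpeq_iff_restr. intros m.
    destruct (covers_below (subst_src e) _ (bounded_below m)) as [N HN].
    rewrite (restr_subst_word _ _ _ (bounded_below N) (HN N (le_n N))), !restr_tone.
    apply fpeq_refl.
  - intros x. apply finite_word_expand.
Qed.

Lemma filter_index_flat_map_cover p p' L : covers (subst_src e) p p' ->
  filter_index p (flat_map e (filter_index p' L)) = filter_index p (flat_map e L).
Proof.
  intros Hcov. induction L as [|a L IH]; simpl; auto.
  rewrite !flat_map_app, !filter_index_app, <- IH. f_equal.
  destruct (p' (projT1 a)) eqn:Ea; simpl; [now rewrite app_nil_r|].
  symmetry. apply filter_index_none. intros b Hb.
  destruct (p (projT1 b)) eqn:Eb; auto.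
  rewrite (Hcov _ _ Eb (subst_src_spec e _ _ Hb)) in Ea. discriminate.
Qed.
End LetterSubst.

Lemma subst_word_comp {G H K : nat -> GrpData}
    (e1 : letter_subst G H) (e2 : letter_subst H K) (e3 : letter_subst G K) :
  (forall a, fpeq (flat_map e2 (e1 a)) (e3 a)) ->
  forall x, tpeq (subst_word e2 (subst_word e1 x)) (subst_word e3 x).
Proof.
  intros Hcomp x. apply tpeq_iff_restr. intros m.
  destruct (covers_below (subst_src e2) _ (bounded_below m)) as [N2 HN2].
  destruct (covers_below (subst_src e1) _ (bounded_below N2)) as [N1 HN1].
  destruct (covers_below (subst_src e3) _ (bounded_below m)) as [N3 HN3].
  set (N := max N1 N3).
  eapply fpeq_trans; [apply (fpeq_restr_subst_word e2 _ _ _ (bounded_below N2) (HN2 N2 (le_n _)))|].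
  eapply fpeq_trans;
    [|apply fpeq_sym, (fpeq_restr_subst_word e3 _ _ _ (bounded_below N) (HN3 N ltac:(lia)))].
  rewrite (restr_subst_word e1 _ _ _ (bounded_below N) (HN1 N ltac:(lia))).
  eapply fpeq_trans.
  { apply fpeq_filter_index, fpeq_flat_map_subst; [apply subst_fun_compat|].
    apply fpeq_filter_index, fpeq_drop_trivial. }
  rewrite (filter_index_flat_map_cover e2 _ _ _ (HN2 N2 (le_n _))).
  apply fpeq_filter_index. rewrite flat_map_flat_map. now apply fpeq_flat_map.
Qed.

(** * Deleting finitely many letters *)

Section SubWord.
Context {G : nat -> GrpData} (HG : forall n, is_group (G n)) (u : IWord G).

Definition keep_at (Q : iL u -> Prop) (x : iL u) : list (fletter nat G) :=
  if asbool (Q x) then [letter_of u x] else [].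

Lemma keep_at_src Q x b : In b (keep_at Q x) -> In (iidx u x) [projT1 b].
Proof. unfold keep_at. destruct (asbool (Q x)); [intros [<-|[]]; now left|intros []]. Qed.

Definition sub_word (Q : iL u -> Prop) : IWord G :=
  expand_word u (keep_at Q) (fun n => [n]) (keep_at_src Q).

Lemma restr_sub_word Q p s : restr_enum u p s ->
  restr (sub_word Q) p = map (letter_of u) (filter (fun x => asbool (Q x)) s).
Proof.
  intros K. unfold sub_word.
  rewrite (restr_expand u (keep_at Q) _ _ p p s K) by (intros n m Hn [<-|[]]; auto).
  assert (E : flat_map (keep_at Q) s = map (letter_of u) (filter (fun x => asbool (Q x)) s)).
  { clear K. induction s as [|a s IH]; simpl; auto. unfold keep_at at 1.
    destruct (asbool (Q a)); simpl; congruence. }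
  rewrite E, drop_trivial_letter_of, filter_index_all; [reflexivity|].
  intros b Hb. apply in_map_iff in Hb as [x [<- Hx]].
  apply filter_In in Hx as [Hx _]. now apply K.
Qed.

Lemma sub_word_split (Q Q1 Q2 : iL u -> Prop) :
  (forall x, Q x <-> Q1 x \/ Q2 x) -> (forall x y, Q1 x -> Q2 y -> ilt u x y) ->
  tpeq (sub_word Q) (tmul (sub_word Q1) (sub_word Q2)).
Proof.
  intros HQ Hord. apply tpeq_iff_restr. intros m.
  destruct (restr_enum_exists u _ (bounded_below m)) as [s K]. simpl_restr.
  rewrite !(restr_sub_word _ _ _ K), <- map_app.
  rewrite (filter_app_sorted (ilt u) (ilt_irrefl G u) (ilt_trans G u)
             _ (fun x => asbool (Q1 x)) (fun x => asbool (Q2 x)) s (proj1 K)).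
  - apply fpeq_refl.
  - intros x. destruct (asboolP (Q x)), (asboolP (Q1 x)), (asboolP (Q2 x));
      specialize (HQ x); intuition congruence.
  - intros x y. destruct (asboolP (Q1 x)), (asboolP (Q2 y)); auto; discriminate.
Qed.

Lemma sub_word_ext (Q Q' : iL u -> Prop) : (forall x, Q x <-> Q' x) -> tpeq (sub_word Q) (sub_word Q').
Proof.
  intros E. apply tpeq_iff_restr. intros m.
  destruct (restr_enum_exists u _ (bounded_below m)) as [s K].
  rewrite !(restr_sub_word _ _ _ K).
  rewrite (filter_ext (fun x => asbool (Q x)) (fun x => asbool (Q' x))); [apply fpeq_refl|].
  intros x. destruct (asboolP (Q x)), (asboolP (Q' x)); firstorder.
Qed.

Lemma sub_word_full (Q : iL u -> Prop) : (forall x, Q x) -> tpeq (sub_word Q) u.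
Proof.
  intros HQ. apply tpeq_iff_restr. intros m.
  destruct (restr_enum_exists u _ (bounded_below m)) as [s K].
  rewrite (restr_sub_word _ _ _ K), (restr_spec _ _ _ K).
  rewrite (filter_ext_in _ (fun _ => true)), filter_true; [apply fpeq_refl|].
  intros x _. destruct (asboolP (Q x)) as [|N]; [reflexivity|now exfalso; apply N].
Qed.

Lemma finite_sub_word (Q : iL u -> Prop) c : (forall x, Q x -> x = c) -> finite_word G (sub_word Q).
Proof.
  intros HQ. exists (block_positions u (keep_at Q) c). intros a.
  replace c with (projT1 a); [apply in_block_positions|].
  destruct a as [x [j [h1 h2]]]. simpl in *. unfold keep_at in h1.
  destruct (asboolP (Q x)); [auto|simpl in h1; lia].
Qed.

(* Splitting the word as [A C B] around [c]: [(A C B) (A B)^-1 = A C A^-1], with [C]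
   a finite word. *)
Lemma aeq_sub_word_remove (Q : iL u -> Prop) c :
  aeq (sub_word Q) (sub_word (fun x => Q x /\ x <> c)).
Proof.
  set (A := sub_word (fun x => Q x /\ ilt u x c)).
  set (C := sub_word (fun x => Q x /\ x = c)).
  set (B := sub_word (fun x => Q x /\ ilt u c x)).
  assert (Hsplit : tpeq (sub_word Q) (tmul A (tmul C B))).
  { eapply tpeq_trans.
    - apply (sub_word_split Q (fun x => Q x /\ ilt u x c) (fun x => Q x /\ (x = c \/ ilt u c x))).
      + intros x. destruct (ilt_total G u x c) as [->|[|]]; intuition.
      + intros x y [_ Hx] [_ [->|Hy]]; eauto using ilt_trans.
    - apply tmul_compat; [apply tpeq_refl|]. apply sub_word_split.
      + intros x. intuition.
      + now intros x y [_ ->] [_ Hy]. }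
  assert (Hsplit' : tpeq (sub_word (fun x => Q x /\ x <> c)) (tmul A B)).
  { apply sub_word_split.
    - intros x. destruct (ilt_total G u x c) as [->|[|]]; intuition;
        subst; eapply ilt_irrefl; eauto.
    - intros x y [_ Hx] [_ Hy]. eauto using ilt_trans. }
  apply in_nclosure_tpeq with (tconj G A C).
  - apply in_nclosure_tconj, (finite_sub_word _ c). now intros x [_ ->].
  - apply tpeq_iff_restr. intros m. unfold tconj.
    apply (fpeq_restr_of_tpeq _ _ (below m)) in Hsplit, Hsplit'; try apply bounded_below.
    simpl_restr. rewrite !restr_tmul in Hsplit by apply bounded_below.
    rewrite !restr_tmul in Hsplit' by apply bounded_below.
    eapply fpeq_trans;
      [|apply fpeq_app; [apply fpeq_sym, Hsplit|apply (fpeq_winv HG), fpeq_sym, Hsplit']].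
    rewrite <- app_assoc. apply fpeq_sym, fpeq_delete_middle, HG.
Qed.

Lemma aeq_sub_word_delete (S : list (iL u)) : aeq u (sub_word (fun x => ~ In x S)).
Proof.
  induction S as [|c S IH].
  - apply (aeq_of_tpeq HG), tpeq_sym, sub_word_full. now intros x [].
  - apply (aeq_trans HG) with (sub_word (fun x => ~ In x S)); [exact IH|].
    apply (aeq_trans HG) with (sub_word (fun x => ~ In x S /\ x <> c));
      [apply aeq_sub_word_remove|].
    apply (aeq_of_tpeq HG), sub_word_ext. intros x. simpl. intuition.
Qed.
End SubWord.

Lemma keep_index_src {G : nat -> GrpData} (q : nat -> bool) (a b : fletter nat G) :
  In b (if q (projT1 a) then [a] else []) -> In (projT1 a) [projT1 b].
Proof. destruct (q (projT1 a)); [intros [<-|[]]; now left|intros []]. Qed.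

Definition keep_index {G : nat -> GrpData} (q : nat -> bool) : letter_subst G G := {|
  subst_fun := fun a => if q (projT1 a) then [a] else [];
  subst_src := fun n => [n];
  subst_src_spec := keep_index_src q;
  subst_fun_compat := subst_compat_filter_index q |}.

Lemma aeq_subst_keep_index {G : nat -> GrpData} (HG : forall n, is_group (G n))
    (q : nat -> bool) (u : IWord G) :
  bounded (fun n => negb (q n)) -> aeq (subst_word (keep_index q) u) u.
Proof.
  intros Hq. destruct (restr_enum_exists u _ Hq) as [S [_ HS]].
  apply (aeq_sym HG), (aeq_trans HG) with (sub_word u (fun x => ~ In x S));
    [now apply aeq_sub_word_delete|].
  apply (aeq_of_tpeq HG), tpeq_iff_restr. intros m.
  destruct (restr_enum_exists u _ (bounded_below m)) as [s K].
  rewrite (restr_sub_word _ _ _ _ K).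
  eapply fpeq_trans;
    [|apply fpeq_sym, (fpeq_restr_subst_word _ _ _ _ (bounded_below m)); intros n k Hn [<-|[]]; auto].
  rewrite (restr_spec _ _ _ K). change (flat_map _ ?l) with (filter_index q l).
  rewrite <- map_filter_index, filter_index_all.
  - rewrite (filter_ext (fun x => asbool (~ In x S)) (fun x => q (iidx u x))); [apply fpeq_refl|].
    intros x. specialize (HS x).
    destruct (asboolP (~ In x S)), (q (iidx u x)); simpl in HS; intuition congruence.
  - intros b Hb. apply in_map_iff in Hb as [x [<- Hx]]. apply filter_In in Hx as [Hx _]. now apply K.
Qed.

Lemma arch_isomorphic_of_substs {G H : nat -> GrpData}
    (HG : forall n, is_group (G n)) (HH : forall n, is_group (H n))
    (e1 : letter_subst G H) (e2 : letter_subst H G) (q : nat -> bool) :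
  bounded (fun n => negb (q n)) ->
  (forall a, fpeq (flat_map e2 (e1 a)) (keep_index q a)) ->
  (forall b, fpeq (flat_map e1 (e2 b)) [b]) ->
  arch_isomorphic G H.
Proof.
  intros Hq H21 H12.
  apply (arch_isomorphic_of_word_homs HG HH (subst_word e1) (subst_word e2));
    try apply subst_word_hom.
  - intros x. apply (aeq_trans HG) with (subst_word (keep_index q) x).
    + apply (aeq_of_tpeq HG), subst_word_comp, H21.
    + now apply aeq_subst_keep_index.
  - intros z. apply (aeq_trans HH) with (subst_word (keep_index (fun _ => true)) z).
    + apply (aeq_of_tpeq HH), subst_word_comp, H12.
    + apply aeq_subst_keep_index; [exact HH|]. now exists 0.
Qed.

(** * The three isomorphisms *)

Section Transport.
Context {G : nat -> GrpData}.

Definition transport {i j : nat} (e : i = j) (x : car (G i)) : car (G j) :=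
  eq_rect i (fun t => car (G t)) x j e.

Lemma existT_transport i j (e : i = j) (x : car (G i)) :
  existT (fun t => car (G t)) j (transport e x) = existT _ i x.
Proof. now destruct e. Qed.

Lemma existT_transport_index (g : nat -> nat) (P : nat -> Type)
    (build : forall j, car (G (g j)) -> P j) m j (h : j = m) (e : g m = g j) y :
  existT P j (build j (transport e y)) = existT P m (build m y).
Proof. subst j. now replace e with (eq_refl (g m)) by apply proof_irrelevance. Qed.

Context (HG : forall n, is_group (G n)).

Lemma transport_geq i j (e : i = j) x y : geq (G i) x y -> geq (G j) (transport e x) (transport e y).
Proof. now destruct e. Qed.

Lemma transport_mul i j (e : i = j) x y :
  geq (G j) (transport e (gmul (G i) x y)) (gmul (G j) (transport e x) (transport e y)).
Proof. destruct e. apply (geq_refl _ (HG i)). Qed.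

Lemma transport_one i j (e : i = j) : geq (G j) (transport e (gone (G i))) (gone (G j)).
Proof. destruct e. apply (geq_refl _ (HG i)). Qed.
End Transport.

Section Reindex.
Context (G : nat -> GrpData) (HG : forall n, is_group (G n)) (f : nat -> nat)
  (f_inj : forall x y, f x = f y -> x = y) (f_surj : forall y, exists x, f x = y).

Definition f_inv (n : nat) : nat := proj1_sig (constructive_indefinite_description _ (f_surj n)).

Lemma f_f_inv n : f (f_inv n) = n.
Proof. unfold f_inv. now destruct constructive_indefinite_description. Qed.

Lemma f_inv_f m : f_inv (f m) = m.
Proof. apply f_inj, f_f_inv. Qed.

Definition reindex_subst : letter_subst G (fun n => G (f n)).
Proof.
  refine {| subst_fun := fun a => [existT (fun m => car (G (f m))) (f_inv (projT1 a))
                                      (transport (eq_sym (f_f_inv (projT1 a))) (projT2 a))];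
            subst_src := fun m => [f m] |}.
  - intros a b [<-|[]]. simpl. rewrite f_f_inv. now left.
  - apply (subst_compat_letterwise (F' := fun m => G (f m)) f_inv
             (fun n x => transport (G := G) (eq_sym (f_f_inv n)) x)).
    + intros. now apply transport_geq.
    + intros. now apply transport_mul.
    + intros. now apply transport_one.
Defined.

Definition unreindex_subst : letter_subst (fun n => G (f n)) G.
Proof.
  refine {| subst_fun := fun a => [existT (fun n => car (G n)) (f (projT1 a)) (projT2 a)];
            subst_src := fun n => [f_inv n];
            subst_fun_compat := subst_compat_reindex f |}.
  intros a b [<-|[]]. simpl. rewrite f_inv_f. now left.
Defined.

Lemma arch_isomorphic_reindex : arch_isomorphic G (fun n => G (f n)).
Proof.
  apply (arch_isomorphic_of_substs HG (fun n => HG (f n)) reindex_subst unreindex_subst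
           (fun _ => true)).
  - now exists 0.
  - intros [n x]. simpl. rewrite existT_transport. apply fpeq_refl.
  - intros [m y]. simpl.
    rewrite (existT_transport_index f (fun k => car (G (f k))) (fun _ y => y) m); [apply fpeq_refl|].
    apply f_inv_f.
Qed.
End Reindex.

Section Shift.
Context (G : nat -> GrpData) (HG : forall n, is_group (G n)) (k : nat).

Definition shift_down (a : fletter nat G) : list (fletter nat (fun n => G (n + k))) :=
  match le_dec k (projT1 a) with
  | left h => [existT (fun m => car (G (m + k))) (projT1 a - k)
                 (transport (eq_sym (Nat.sub_add k (projT1 a) h)) (projT2 a))]
  | right _ => []
  end.

Lemma subst_compat_shift_down : subst_compat shift_down.
Proof.
  split; intros n; unfold shift_down; simpl; destruct le_dec as [h|h]; intros;
    try apply fpeq_refl.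
  - now apply (fpeq_letter_geq (F := fun m => G (m + k))), transport_geq.
  - eapply fpeq_trans; [apply (fpeq_letter_geq (F := fun m => G (m + k))), transport_mul, HG|].
    apply (fpeq_letter_mul (F := fun m => G (m + k))).
  - eapply fpeq_trans; [apply (fpeq_letter_geq (F := fun m => G (m + k))), transport_one, HG|].
    apply (fpeq_letter_one (F := fun m => G (m + k))).
Qed.

Definition shift_down_subst : letter_subst G (fun n => G (n + k)).
Proof.
  refine {| subst_fun := shift_down; subst_src := fun m => [m + k];
            subst_fun_compat := subst_compat_shift_down |}.
  intros a b. unfold shift_down. destruct le_dec as [h|h]; [|intros []].
  intros [<-|[]]. simpl. left. lia.
Defined.

Definition shift_up_subst : letter_subst (fun n => G (n + k)) G.
Proof.
  refine {| subst_fun := fun a => [existT (fun n => car (G n)) (projT1 a + k) (projT2 a)];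
            subst_src := fun n => [n - k];
            subst_fun_compat := subst_compat_reindex (fun m => m + k) |}.
  intros a b [<-|[]]. simpl. left. lia.
Defined.

Lemma arch_isomorphic_shift : arch_isomorphic G (fun n => G (n + k)).
Proof.
  apply (arch_isomorphic_of_substs HG (fun n => HG (n + k)) shift_down_subst shift_up_subst
           (fun n => k <=? n)).
  - exists k. intros n Hn. destruct (Nat.leb_spec k n); [discriminate|lia].
  - intros [n x]. simpl. unfold shift_down. simpl.
    destruct le_dec as [h|h]; destruct (Nat.leb_spec k n); try lia; [|apply fpeq_refl].
    simpl. rewrite existT_transport. apply fpeq_refl.
  - intros [m y]. simpl. unfold shift_down. simpl. destruct le_dec as [h|h]; [|lia].
    rewrite (existT_transport_index (fun j => j + k) (fun j => car (G (j + k))) (fun _ y => y) m);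
      [apply fpeq_refl|lia].
Qed.
End Shift.

Section Pairing.
Context (G : nat -> GrpData) (HG : forall n, is_group (G n)).

Definition pair_factor (m : nat) : GrpData := FreeProd bool (fam2 (G (2 * m)) (G (2 * m + 1))).

Definition pair_letter (m : nat) : Type := fletter bool (fam2 (G (2 * m)) (G (2 * m + 1))).

Lemma pair_factor_is_group m : is_group (pair_factor m).
Proof. apply FreeProd_is_group. intros [|]; apply HG. Qed.

Lemma half_spec n : n <> 2 * (n / 2) -> n = 2 * (n / 2) + 1.
Proof. intros K. pose proof (Nat.div_mod_eq n 2). pose proof (Nat.mod_upper_bound n 2). lia. Qed.

Lemma half_even m : 2 * m / 2 = m.
Proof. rewrite Nat.mul_comm. now apply Nat.div_mul. Qed.

Lemma half_odd m : (2 * m + 1) / 2 = m.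
Proof. replace (2 * m + 1) with (1 + m * 2) by lia. now rewrite Nat.div_add. Qed.

Definition to_pair_letter n (x : car (G n)) : pair_letter (n / 2) :=
  match Nat.eq_dec n (2 * (n / 2)) with
  | left e => existT (fun b => car (fam2 (G (2 * (n / 2))) (G (2 * (n / 2) + 1)) b))
                true (transport e x)
  | right ne => existT (fun b => car (fam2 (G (2 * (n / 2))) (G (2 * (n / 2) + 1)) b))
                  false (transport (half_spec n ne) x)
  end.

Definition of_pair_letter m (a : pair_letter m) : fletter nat G :=
  match a with existT _ b y =>
    (if b return car (fam2 (G (2 * m)) (G (2 * m + 1)) b) -> fletter nat G
     then fun y => existT (fun n => car (G n)) (2 * m) y
     else fun y => existT (fun n => car (G n)) (2 * m + 1) y) y
  end.

Lemma subst_compat_pair : subst_compat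
  (fun a : fletter nat G => [existT (fun m => car (pair_factor m)) (projT1 a / 2)
                               [to_pair_letter (projT1 a) (projT2 a)]]).
Proof.
  apply (subst_compat_letterwise (F' := pair_factor) (fun n => n / 2)
           (fun n x => [to_pair_letter n x])); intros n; unfold to_pair_letter;
    destruct Nat.eq_dec; intros; unfold pair_factor; cbn [geq gmul gone FreeProd].
  1-2: now apply fpeq_letter_geq, (transport_geq (G := G)).
  1-2: eapply fpeq_trans; [|apply (fpeq_letter_mul (I := bool))];
         apply fpeq_letter_geq, (transport_mul (G := G) HG).
  1-2: eapply fpeq_trans; [|apply (fpeq_letter_one (I := bool))];
         apply fpeq_letter_geq, (transport_one (G := G) HG).
Qed.

Definition pair_subst : letter_subst G pair_factor.
Proof.
  refine {| subst_fun := fun a => [existT (fun m => car (pair_factor m)) (projT1 a / 2)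
                                     [to_pair_letter (projT1 a) (projT2 a)]];
            subst_src := fun m => [2 * m; 2 * m + 1];
            subst_fun_compat := subst_compat_pair |}.
  intros [n x] b [<-|[]]. change (In n [2 * (n / 2); 2 * (n / 2) + 1]).
  pose proof (Nat.div_mod_eq n 2). pose proof (Nat.mod_upper_bound n 2).
  destruct (Nat.eq_dec n (2 * (n / 2))); [left|right; left]; lia.
Defined.

Lemma subst_compat_unpair : subst_compat
  (fun a : fletter nat pair_factor => map (of_pair_letter (projT1 a)) (projT2 a)).
Proof.
  split; intros m; cbn [projT1 projT2].
  - intros w w' H. rewrite <- !flat_map_singleton. revert w w' H.
    apply fpeq_flat_map_subst. split.
    + intros [|] x y H; now apply (fpeq_letter_geq (F := G)).
    + intros [|] x y; apply (fpeq_letter_mul (F := G)).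
    + intros [|]; apply (fpeq_letter_one (F := G)).
  - intros w w'. cbn [pair_factor gmul FreeProd]. rewrite map_app. apply fpeq_refl.
  - apply fpeq_refl.
Qed.

Definition unpair_subst : letter_subst pair_factor G.
Proof.
  refine {| subst_fun := fun a : fletter nat pair_factor => map (of_pair_letter (projT1 a)) (projT2 a);
            subst_src := fun n => [n / 2];
            subst_fun_compat := subst_compat_unpair |}.
  intros [m w] b Hb. simpl in Hb. apply in_map_iff in Hb as [[[|] y] [<- _]]; left; simpl.
  - apply half_even.
  - apply half_odd.
Defined.

Lemma pair_of_pair_letter m (a : pair_letter m) :
  pair_subst (of_pair_letter m a) = [existT (fun j => car (pair_factor j)) m [a]].
Proof.
  destruct a as [[|] y]; cbn [of_pair_letter pair_subst subst_fun projT1 projT2].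
  all: unfold to_pair_letter.
  - destruct Nat.eq_dec as [e|ne]; [|exfalso; rewrite half_even in ne; lia].
    f_equal. apply (existT_transport_index (fun j => 2 * j) (fun j => car (pair_factor j))
                      (fun j y => [existT _ true y])).
    apply half_even.
  - destruct Nat.eq_dec as [e|ne]; [exfalso; rewrite half_odd in e; lia|].
    f_equal. apply (existT_transport_index (fun j => 2 * j + 1) (fun j => car (pair_factor j))
                      (fun j y => [existT _ false y])).
    apply half_odd.
Qed.

Lemma arch_isomorphic_pair : arch_isomorphic G pair_factor.
Proof.
  apply (arch_isomorphic_of_substs HG pair_factor_is_group pair_subst unpair_subst (fun _ => true)).
  - now exists 0.
  - intros [n x]. simpl. unfold to_pair_letter.
    destruct Nat.eq_dec; simpl; rewrite existT_transport; apply fpeq_refl.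
  - intros [m w]. simpl. rewrite flat_map_map.
    rewrite (flat_map_ext_in _ (fun a => [existT (fun j => car (pair_factor j)) m [a]]))
      by (intros; apply pair_of_pair_letter).
    induction w as [|a w IH]; simpl.
    + apply fpeq_sym, (fpeq_letter_one (F := pair_factor)).
    + eapply fpeq_trans; [apply (fpeq_app [_] [_] _ _ (fpeq_refl _ _ _) IH)|].
      apply fpeq_sym, (fpeq_letter_mul (F := pair_factor) m [a] w).
Qed.
End Pairing.

Theorem lemma17 (G : nat -> GrpData) (HG : forall n, is_group (G n)) :
  (forall f : nat -> nat,
      (forall x y, f x = f y -> x = y) -> (forall y, exists x, f x = y) ->
      arch_isomorphic G (fun n => G (f n))) /\
  (forall k : nat, arch_isomorphic G (fun n => G (n + k))) /\
  arch_isomorphic G (fun n => FreeProd bool (fam2 (G (2 * n)) (G (2 * n + 1)))).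
Proof.
  split; [|split].
  - intros f f_inj f_surj. exact (arch_isomorphic_reindex G HG f f_inj f_surj).
  - intros k. exact (arch_isomorphic_shift G HG k).
  - exact (arch_isomorphic_pair G HG).
Qed.
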